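(* Let $\mu$ be a Radon measure on $\mathbb{R}^n$ and $\delta\in\Upsilon(\mathbb{R}^n,\mu)$. If $\bar\delta x_j=0$ ($\mu$-a.e.) for each $j=1,\dots,n$, then $\delta=0$.
   Context: For a metric space $X$ with Borel measure $\mu$, $\mathrm{Lip}_b(X)$ is the space of bounded Lipschitz functions with norm $\max(\sup|f|,L(f))$; a derivation is a linear map $\delta:\mathrm{Lip}_b(X)\to L^\infty(X,\mu)$ with $\delta(fg)=f\delta g+g\delta f$ and such that whenever a net $(f_\alpha)$ with $\sup\|f_\alpha\|_{\mathrm{Lip}}<\infty$ converges pointwise to $f$, $\delta f_\alpha\to\delta f$ weak-* in $L^\infty(X,\mu)$; $\Upsilon(X,\mu)$ is the set of derivations. For a Lipschitz (possibly unbounded) $f$ on $\mathbb{R}^n$, $\bar\delta f$ is the function with $\chi_B\bar\delta f=\chi_B\,\delta(\tilde f_B)$ for every ball $B$, where $\tilde f_B$ is any bounded Lipschitz function agreeing with $f$ on $B$ (independent of the choice by locality). $x_j$ is the $j$-th coordinate function. *)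

From HB Require Import structures.
From mathcomp Require Import all_boot all_order all_algebra.
From mathcomp Require Import all_classical all_reals all_analysis.
Set Implicit Arguments. Unset Strict Implicit. Unset Printing Implicit Defensive.
Import Order.TTheory GRing.Theory Num.Theory.
Import numFieldNormedType.Exports.
Local Open Scope classical_set_scope.
Local Open Scope ring_scope.

Definition Rn (R : realType) (n : nat) := 'rV[R]_n.

(* R^n equipped with its Borel sigma-algebra (generated by the open sets
   of the usual (product = Euclidean) topology). *)
Notation borelRn R n :=
  (g_sigma_algebraType (@open ('rV[R]_n))).

Definition toB (R : realType) (n : nat) (h : 'rV[R]_n -> R) : borelRn R n -> R := h.
Definition setB (R : realType) (n : nat) (A : set 'rV[R]_n) : set (borelRn R n) := A.

Definition edist (R : realType) (n : nat) (x y : 'rV[R]_n) : R :=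
  Num.sqrt (\sum_(i < n) (x ord0 i - y ord0 i) ^+ 2).

Definition eball (R : realType) (n : nat) (x : 'rV[R]_n) (r : R) : set 'rV[R]_n :=
  [set y | edist x y < r].

Definition coordfun (R : realType) (n : nat) (j : 'I_n) : 'rV[R]_n -> R :=
  fun x => x ord0 j.

Definition lipschitz_with (R : realType) (n : nat) (L : R) (f : 'rV[R]_n -> R) :=
  forall x y, `|f x - f y| <= L * edist x y.

Definition Lipb (R : realType) (n : nat) (f : 'rV[R]_n -> R) :=
  (exists C : R, forall x, `|f x| <= C) /\ (exists L : R, lipschitz_with L f).

(* ||f||_Lip = max(sup |f|, L(f)) <= C *)
Definition Lipnorm_le (R : realType) (n : nat) (C : R) (f : 'rV[R]_n -> R) :=
  (forall x, `|f x| <= C) /\ lipschitz_with C f.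

Definition radon (R : realType) (n : nat)
    (mu : {measure set (borelRn R n) -> \bar R}) :=
  [/\ (forall (x : 'rV[R]_n) (r : R), 0 < r -> (mu (setB (eball x r)) < +oo)%E),
      (forall A : set (borelRn R n), measurable A ->
         mu A = ereal_inf [set mu (setB U) | U in [set U : set 'rV[R]_n |
                                                 open U /\ (A : set 'rV[R]_n) `<=` U]])
    & (forall U : set 'rV[R]_n, open U ->
         mu (setB U) = ereal_sup [set mu (setB K) | K in [set K : set 'rV[R]_n |
                                                 compact K /\ K `<=` U]])].

Definition Linf (R : realType) (n : nat)
    (mu : {measure set (borelRn R n) -> \bar R}) (h : 'rV[R]_n -> R) :=
  measurable_fun setT (toB h) /\
  exists M : R, {ae mu, forall x : borelRn R n, `|toB h x| <= M}.

Definition L1 (R : realType) (n : nat)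
    (mu : {measure set (borelRn R n) -> \bar R}) (g : 'rV[R]_n -> R) :=
  mu.-integrable setT (fun x : borelRn R n => (toB g x)%:E).

Definition aeeq (R : realType) (n : nat)
    (mu : {measure set (borelRn R n) -> \bar R}) (h1 h2 : 'rV[R]_n -> R) :=
  {ae mu, forall x : borelRn R n, toB h1 x = toB h2 x}.

Definition directed (I : Type) (le : I -> I -> Prop) :=
  [/\ inhabited I, (forall a, le a a), (forall a b c, le a b -> le b c -> le a c)
    & (forall a b, exists c, le a c /\ le b c)].

Definition net_cvg (R : realType) (I : Type) (le : I -> I -> Prop) (u : I -> R) (l : R) :=
  forall e : R, 0 < e -> exists a0, forall a, le a0 a -> `|u a - l| < e.

Definition weakstar_cvg (R : realType) (n : nat)
    (mu : {measure set (borelRn R n) -> \bar R})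
    (I : Type) (le : I -> I -> Prop) (h : I -> 'rV[R]_n -> R) (l : 'rV[R]_n -> R) :=
  forall g, L1 mu g ->
    net_cvg le (fun a => Rintegral mu setT (fun x : borelRn R n => toB (h a) x * toB g x))
               (Rintegral mu setT (fun x : borelRn R n => toB l x * toB g x)).

(* delta is a derivation in Upsilon(R^n, mu); delta is only constrained on
   Lip_b(R^n), and its values are considered modulo mu-a.e. equality. *)
Definition derivation (R : realType) (n : nat)
    (mu : {measure set (borelRn R n) -> \bar R})
    (delta : ('rV[R]_n -> R) -> ('rV[R]_n -> R)) :=
  [/\ (forall f, Lipb f -> Linf mu (delta f)),
      (forall f g (a b : R), Lipb f -> Lipb g ->
         aeeq mu (delta (fun x => a * f x + b * g x))
                 (fun x => a * delta f x + b * delta g x)),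
      (forall f g, Lipb f -> Lipb g ->
         aeeq mu (delta (fun x => f x * g x))
                 (fun x => f x * delta g x + g x * delta f x))
    & (forall (I : Type) (le : I -> I -> Prop) (fa : I -> 'rV[R]_n -> R) (f : 'rV[R]_n -> R),
         directed le ->
         (forall a, Lipb (fa a)) -> Lipb f ->
         (exists C : R, forall a, Lipnorm_le C (fa a)) ->
         (forall x, net_cvg le (fun a => fa a x) (f x)) ->
         weakstar_cvg mu le (fun a => delta (fa a)) (delta f))].

Definition is_bar_delta (R : realType) (n : nat)
    (mu : {measure set (borelRn R n) -> \bar R})
    (delta : ('rV[R]_n -> R) -> ('rV[R]_n -> R)) (f h : 'rV[R]_n -> R) :=
  forall (x : 'rV[R]_n) (r : R), 0 < r ->
  forall g, Lipb g -> (forall y, eball x r y -> g y = f y) ->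
    {ae mu, forall y : borelRn R n, setB (eball x r) y -> toB h y = toB (delta g) y}.

From Pilot Require Import Defs.
From HB Require Import structures.
From mathcomp Require Import all_boot all_order all_algebra.
From mathcomp Require Import all_classical all_reals all_analysis.
From mathcomp Require Import ring lra.
From mathcomp Require Import measurable_realfun.
Import Order.TTheory GRing.Theory Num.Theory.
Import numFieldNormedType.Exports.
Local Open Scope classical_set_scope.
Local Open Scope ring_scope.

Set Implicit Arguments. Unset Strict Implicit.
Local Notation edist := Defs.edist.

(* Call u delta-null on B when u is bounded Lipschitz and delta u = 0 a.e. on B. For
   a Borel set B of finite measure these functions form an algebra containing the
   constants, and the weak-* continuity of delta, tested against L^1 functions
   supported in B, makes the class closed under uniformly bounded Lipschitz pointwise
   limits of nets. The Leibniz rule applied to v^2 = u^2 + e^2 shows that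
   v = sqrt (u^2 + e^2) is delta-null with u, so letting e -> 0 the class is closed
   under |.| and hence under min. On a ball B of radius r the hypothesis on the
   coordinates makes each clamped coordinate max (-rho) (min rho x_j), rho >= r,
   delta-null on B; and a bounded L-Lipschitz f is the pointwise limit, over finite
   vertex sets and growing rho, of the infima of the cones
   f y + L sum_j |clamp_rho x_j - y_j|. So delta f = 0 a.e. on every ball. *)

Section RealInequalities.
Variable R : realType.
Implicit Types a b c d e r s t : R.

Lemma ler_dist_min2 a b c d t : `|a - c| <= t -> `|b - d| <= t ->
  `|Num.min a b - Num.min c d| <= t.
Proof.
rewrite !ler_norml => /andP[h1 h2] /andP[h3 h4].
by case: (leP a b) => h5; case: (leP c d) => h6; apply/andP; split; lra.
Qed.

Lemma ler_dist_max2 a b c d t : `|a - c| <= t -> `|b - d| <= t ->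
  `|Num.max a b - Num.max c d| <= t.
Proof.
rewrite !ler_norml => /andP[h1 h2] /andP[h3 h4].
by case: (leP a b) => h5; case: (leP c d) => h6; apply/andP; split; lra.
Qed.

Definition clamp r t := Num.max (- r) (Num.min r t).

Lemma ler_dist_clamp r s t : `|clamp r s - clamp r t| <= `|s - t|.
Proof.
have dist_rr u : `|u - u| <= `|s - t| by rewrite subrr normr0.
by apply: ler_dist_max2 => //; apply: ler_dist_min2.
Qed.

Lemma norm_clamp_le r t : 0 <= r -> `|clamp r t| <= r.
Proof.
move=> r0; rewrite /clamp ler_norml le_max lexx ge_max ge_min lexx /=; lra.
Qed.

Lemma clamp_id r t : `|t| <= r -> clamp r t = t.
Proof. by rewrite ler_norml => /andP[h1 h2]; rewrite /clamp min_r // max_r. Qed.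

Lemma sum_sqr_le_sqr_sum_norm (I : Type) (l : seq I) (u : I -> R) :
  \sum_(i <- l) u i ^+ 2 <= (\sum_(i <- l) `|u i|) ^+ 2.
Proof.
elim: l => [|i l IH]; first by rewrite !big_nil expr0n.
rewrite !big_cons.
have S0 : 0 <= \sum_(j <- l) `|u j| by apply: sumr_ge0.
have := normr_ge0 (u i); rewrite -(real_normK (num_real (u i))); nra.
Qed.

Lemma ler_dist_sqrt_sqrD e s t : 0 < e ->
  `|Num.sqrt (s ^+ 2 + e ^+ 2) - Num.sqrt (t ^+ 2 + e ^+ 2)| <= `|s - t|.
Proof.
move=> e0.
set p := Num.sqrt (s ^+ 2 + e ^+ 2); set q := Num.sqrt (t ^+ 2 + e ^+ 2).
have e2 : 0 < e ^+ 2 by rewrite exprn_gt0.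
have hp : p ^+ 2 = s ^+ 2 + e ^+ 2 by rewrite sqr_sqrtr // addr_ge0 // sqr_ge0.
have hq : q ^+ 2 = t ^+ 2 + e ^+ 2 by rewrite sqr_sqrtr // addr_ge0 // sqr_ge0.
have p0 : 0 < p by rewrite sqrtr_gt0; have := sqr_ge0 s; lra.
have q0 : 0 < q by rewrite sqrtr_gt0; have := sqr_ge0 t; lra.
have ps : `|s| <= p by rewrite -sqrtr_sqr ler_sqrt ?addr_ge0 ?sqr_ge0 // lerDl sqr_ge0.
have qt : `|t| <= q by rewrite -sqrtr_sqr ler_sqrt ?addr_ge0 ?sqr_ge0 // lerDl sqr_ge0.
have E : `|p - q| * (p + q) = `|s - t| * `|s + t|.
  rewrite -(ger0_norm (ltW (addr_gt0 p0 q0))) -!normrM; congr `|_|.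
  by rewrite -subr_sqr hp hq -subr_sqr; ring.
have st : `|s + t| <= p + q by apply: le_trans (ler_normD _ _) _; exact: lerD.
rewrite -(ler_pM2r (addr_gt0 p0 q0)) E; exact: ler_wpM2l.
Qed.

Lemma dist_sqrt_sqrD_norm_le e s : 0 <= e -> `|Num.sqrt (s ^+ 2 + e ^+ 2) - `|s| | <= e.
Proof.
move=> e0.
have h1 : `|s| <= Num.sqrt (s ^+ 2 + e ^+ 2).
  by rewrite -sqrtr_sqr ler_sqrt ?addr_ge0 ?sqr_ge0 // lerDl sqr_ge0.
have h2 : Num.sqrt (s ^+ 2 + e ^+ 2) <= `|s| + e.
  rewrite -(ger0_norm (addr_ge0 (normr_ge0 s) e0)) -sqrtr_sqr ler_sqrt ?sqr_ge0 //.
  rewrite -(real_normK (num_real s)); have := normr_ge0 s; nra.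
rewrite ger0_norm; lra.
Qed.

End RealInequalities.

Section BoundedLipschitz.
Variables (R : realType) (n : nat).
Implicit Types (x y : 'rV[R]_n) (f g u : 'rV[R]_n -> R).

Lemma edist_ge0 x y : 0 <= edist x y.
Proof. exact: sqrtr_ge0. Qed.

Lemma ler_dist_coord_edist x y (i : 'I_n) : `|x ord0 i - y ord0 i| <= edist x y.
Proof.
rewrite /edist -sqrtr_sqr ler_sqrt; last by apply: sumr_ge0 => j _; exact: sqr_ge0.
by rewrite (bigD1 i) //= lerDl; apply: sumr_ge0 => j _; exact: sqr_ge0.
Qed.

Lemma edist_le_sum_dist_coord x y : edist x y <= \sum_(i < n) `|x ord0 i - y ord0 i|.
Proof.
have S0 : 0 <= \sum_(i < n) `|x ord0 i - y ord0 i| by apply: sumr_ge0.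
rewrite /edist -(ger0_norm S0) -sqrtr_sqr ler_sqrt ?sqr_ge0 //.
exact: sum_sqr_le_sqr_sum_norm.
Qed.

Lemma lipschitz_with_le (L C : R) f : L <= C -> lipschitz_with L f -> lipschitz_with C f.
Proof.
move=> LC Hf x y; apply: le_trans (Hf x y) _.
by apply: ler_wpM2r => //; exact: edist_ge0.
Qed.

Lemma Lipb_cst (c : R) : Lipb (fun _ : 'rV[R]_n => c).
Proof.
split; first by exists `|c|.
by exists 0 => x y; rewrite subrr normr0 mul0r.
Qed.

Lemma Lipb_lin (a b : R) f g : Lipb f -> Lipb g -> Lipb (fun x => a * f x + b * g x).
Proof.
move=> [[Cf Hf] [Lf Hlf]] [[Cg Hg] [Lg Hlg]]; split.
  exists (`|a| * Cf + `|b| * Cg) => x.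
  apply: le_trans (ler_normD _ _) _; rewrite !normrM.
  by apply: lerD; apply: ler_wpM2l.
exists (`|a| * Lf + `|b| * Lg) => x y.
have -> : a * f x + b * g x - (a * f y + b * g y) = a * (f x - f y) + b * (g x - g y) by ring.
apply: le_trans (ler_normD _ _) _; rewrite !normrM mulrDl -!mulrA.
by apply: lerD; apply: ler_wpM2l.
Qed.

Lemma Lipb_mul f g : Lipb f -> Lipb g -> Lipb (fun x => f x * g x).
Proof.
move=> [[Cf Hf] [Lf Hlf]] [[Cg Hg] [Lg Hlg]]; split.
  by exists (Cf * Cg) => x; rewrite normrM; apply: ler_pM.
exists (Cf * Lg + Cg * Lf) => x y.
have -> : f x * g x - f y * g y = f x * (g x - g y) + g y * (f x - f y) by ring.
apply: le_trans (ler_normD _ _) _; rewrite !normrM mulrDl -!mulrA.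
by apply: lerD; apply: ler_pM.
Qed.

Lemma Lipb_comp (phi : R -> R) u :
  (forall s t, `|phi s - phi t| <= `|s - t|) -> Lipb u -> Lipb (fun x => phi (u x)).
Proof.
move=> Hphi [[Cu Hu] [Lu Hlu]]; split.
  exists (`|phi 0| + Cu) => x.
  have -> : phi (u x) = phi 0 + (phi (u x) - phi 0) by ring.
  apply: le_trans (ler_normD _ _) _; apply: lerD => //.
  by apply: le_trans (Hphi _ _) _; rewrite subr0.
by exists Lu => x y; exact: le_trans (Hphi _ _) (Hlu x y).
Qed.

Lemma Lipb_clamp_coord (r : R) (j : 'I_n) : 0 <= r ->
  Lipb (fun x : 'rV[R]_n => clamp r (x ord0 j)).
Proof.
move=> r0; split; first by exists r => x; exact: norm_clamp_le.
exists 1 => x y; rewrite mul1r; apply: le_trans (ler_dist_clamp _ _ _) _.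
exact: ler_dist_coord_edist.
Qed.

End BoundedLipschitz.

Section DeltaNull.
Variables (R : realType) (n : nat).
Variable mu : {measure set (borelRn R n) -> \bar R}.
Variable delta : ('rV[R]_n -> R) -> ('rV[R]_n -> R).
Hypothesis delta_derivation : derivation mu delta.
Implicit Types (B : set 'rV[R]_n) (f g u : 'rV[R]_n -> R).

Definition delta_null B u :=
  Lipb u /\ {ae mu, forall y : borelRn R n, B y -> delta u y = 0}.

Lemma derivation_lin (a b : R) f g : Lipb f -> Lipb g ->
  {ae mu, forall y : borelRn R n,
    delta (fun x => a * f x + b * g x) y = a * delta f y + b * delta g y}.
Proof. by case: delta_derivation => _ + _ _; apply. Qed.

Lemma derivation_mul f g : Lipb f -> Lipb g ->
  {ae mu, forall y : borelRn R n,
    delta (fun x => f x * g x) y = f y * delta g y + g y * delta f y}.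
Proof. by case: delta_derivation => _ _ + _; apply. Qed.

Lemma derivation_cst (c : R) : {ae mu, forall y : borelRn R n, delta (fun _ => c) y = 0}.
Proof.
have L1 := @Lipb_cst R n 1.
have one_sqr : (fun _ : 'rV[R]_n => 1 * 1) = (fun _ => 1 : R) by rewrite mulr1.
have := derivation_mul L1 L1; rewrite one_sqr => d1.
have cE : (fun _ : 'rV[R]_n => c * 1 + 0 * 1) = (fun _ => c) by rewrite mulr1 mul0r addr0.
have := derivation_lin c 0 L1 L1; rewrite cE.
apply: filterS2 d1 => y; rewrite !mul1r => d1y ->.
have -> : delta (fun _ => 1) y = 0 by lra.
by rewrite mulr0 mul0r addr0.
Qed.

Lemma delta_null_ext B f g : f =1 g -> delta_null B f -> delta_null B g.
Proof. by move=> /funext ->. Qed.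

Lemma delta_null_cst B (c : R) : delta_null B (fun _ => c).
Proof. by split; [exact: Lipb_cst | apply: filterS (derivation_cst c) => y ->]. Qed.

Lemma delta_null_lin B (a b : R) f g : delta_null B f -> delta_null B g ->
  delta_null B (fun x => a * f x + b * g x).
Proof.
move=> [Lf Zf] [Lg Zg]; split; first exact: Lipb_lin.
apply: filterS3 (derivation_lin a b Lf Lg) Zf Zg => y -> zf zg By.
by rewrite zf // zg // !mulr0 addr0.
Qed.

Lemma delta_null_mul B f g : delta_null B f -> delta_null B g ->
  delta_null B (fun x => f x * g x).
Proof.
move=> [Lf Zf] [Lg Zg]; split; first exact: Lipb_mul.
apply: filterS3 (derivation_mul Lf Lg) Zf Zg => y -> zf zg By.
by rewrite zf // zg // !mulr0 addr0.
Qed.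

Lemma delta_null_sum B (I : eqType) (l : seq I) (F : I -> 'rV[R]_n -> R) :
  (forall i, delta_null B (F i)) -> delta_null B (fun x => \sum_(i <- l) F i x).
Proof.
move=> ZF; elim: l => [|i l IH].
  by apply: delta_null_ext (delta_null_cst B 0) => x; rewrite big_nil.
apply: delta_null_ext (delta_null_lin 1 1 (ZF i) IH) => x.
by rewrite big_cons !mul1r.
Qed.

(* The Leibniz rule gives 2 v delta v = delta (u^2 + e^2) = 0, and v > 0. *)
Lemma delta_null_sqrt_sqrD B u (e : R) : 0 < e -> delta_null B u ->
  delta_null B (fun x => Num.sqrt (u x ^+ 2 + e ^+ 2)).
Proof.
move=> e0 Zu; set v := fun x => _.
have v_gt0 x : 0 < v x.
  rewrite /v sqrtr_gt0; have := sqr_ge0 (u x); have := exprn_gt0 2 e0; lra.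
have Lv : Lipb v := Lipb_comp (fun s t => ler_dist_sqrt_sqrD s t e0) Zu.1.
have Zvv : delta_null B (fun x => v x * v x).
  apply: delta_null_ext (delta_null_lin 1 (e ^+ 2) (delta_null_mul Zu Zu)
    (delta_null_cst B 1)) => x.
  by rewrite mul1r mulr1 -expr2 /v -expr2 sqr_sqrtr // addr_ge0 // sqr_ge0.
split => //; case: Zvv => _ Zvv.
apply: filterS2 Zvv (derivation_mul Lv Lv) => y vv0 dvv By.
move: (vv0 By) => /eqP; rewrite dvv -mulr2n -mulr_natr !mulf_eq0 pnatr_eq0 orbF.
by rewrite gt_eqF //= => /eqP.
Qed.

End DeltaNull.

Section NullIntegrals.
Context d (T : measurableType d) (R : realType).
Variable mu : {measure set T -> \bar R}.

Lemma Rintegral_ae0 (k : T -> R) : measurable_fun setT k ->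
  {ae mu, forall x, k x = 0} -> Rintegral mu setT k = 0.
Proof.
move=> mk k0; rewrite /Rintegral (ae_eq_integral (cst 0%E)) //= ?integral0 //.
- exact/measurable_EFinP.
- by apply: filterS k0 => x /= -> _.
Qed.

Lemma integrable_indic_lty (A : set T) : measurable A -> (mu A < +oo)%E ->
  mu.-integrable setT (fun x => (\1_A x)%:E).
Proof.
move=> mA finA; apply/integrableP; split; first exact/measurable_EFinP/measurable_indic.
rewrite (eq_integral (fun x => (\1_A x)%:E)); last first.
  by move=> t _; rewrite gee0_abs // lee_fin.
by rewrite integral_indic // setIT.
Qed.

Lemma ae_notin_of_Rintegral_indic0 (k : T -> R) (A : set T) (m : nat) :
  measurable A -> (mu A < +oo)%E -> measurable_fun setT k ->
  (forall x, A x -> 0 < k x <= m%:R) ->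
  Rintegral mu setT (fun x => k x * \1_A x) = 0 -> {ae mu, forall y, ~ A y}.
Proof.
move=> mA finA mk kA kA0.
pose F x := (k x * \1_A x)%:E.
have F_ge0 x : (0 <= F x)%E.
  rewrite /F lee_fin /indic; case: (boolP (x \in A)) => [/set_mem /kA /andP[/ltW k0 _]|_].
    by rewrite mulr1.
  by rewrite mulr0.
have mF : measurable_fun setT F.
  by apply/measurable_EFinP/measurable_funM => //; exact: measurable_indic.
have F_le : (\int[mu]_x F x <= m%:R%:E * mu A)%E.
  have -> : mu A = (\int[mu]_x (\1_A x)%:E)%E by rewrite integral_indic // setIT.
  rewrite -ge0_integralZl_EFin //; last exact/measurable_EFinP/measurable_indic.
  apply: ge0_le_integral => //.
    by apply: measurable_funeM; exact/measurable_EFinP/measurable_indic.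
  move=> x _; rewrite /F /indic; case: (boolP (x \in A)) => [/set_mem /kA /andP[_ km]|_].
    by rewrite -EFinM !mulr1 lee_fin.
  by rewrite -EFinM !mulr0.
have F_fin : (\int[mu]_x F x \is a fin_num)%E.
  rewrite ge0_fin_numE; last exact: integral_ge0.
  by apply: le_lt_trans F_le _; rewrite lte_mul_pinfty.
have F_int0 : (\int[mu]_x F x = 0)%E.
  by rewrite -(fineK F_fin); move: kA0; rewrite /Rintegral => ->.
have : ae_eq mu setT F (cst 0%E).
  apply/ae_eq_integral_abs => //.
  by rewrite -F_int0; apply: eq_integral => x _; rewrite gee0_abs.
apply: filterS => y /(_ I) + Ay; rewrite /F /indic mem_set // mulr1 => -[] /eqP.
by have /andP[/gt_eqF -> _] := kA y Ay.
Qed.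

Lemma ae_le0_of_Rintegral_indic0 (k : T -> R) (B : set T) :
  measurable B -> (mu B < +oo)%E -> measurable_fun setT k ->
  (forall A, measurable A -> A `<=` B -> Rintegral mu setT (fun x => k x * \1_A x) = 0) ->
  {ae mu, forall y, B y -> k y <= 0}.
Proof.
move=> mB finB mk kB0.
pose A (m : nat) := B `&` (setT `&` k @^-1` `]0, m%:R]%classic).
have mA m : measurable (A m).
  by apply: measurableI => //; apply: mk => //; exact: measurable_itv.
have AB m : A m `<=` B by move=> y [].
have A_null m : {ae mu, forall y, ~ A m y}.
  apply: (@ae_notin_of_Rintegral_indic0 k _ m (mA m)) => //.
  - by apply: le_lt_trans finB; apply: le_measure; rewrite ?inE.
  - by move=> x [_ [_ /=]]; rewrite in_itv.
  - exact: kB0.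
apply: filterS (ae_foralln A_null) => y Ay By; rewrite leNgt; apply/negP => ky.
apply: (Ay (Num.Def.archi_bound (k y))); split => //; split => //=.
by rewrite in_itv /= ky; exact/ltW/archi_boundP/ltW.
Qed.

(* Testing against [1_A] and [-1_A] bounds [k] from above and from below. *)
Lemma ae_eq0_of_Rintegral_mul0 (k : T -> R) (B : set T) :
  measurable B -> (mu B < +oo)%E -> measurable_fun setT k ->
  (forall g : T -> R, mu.-integrable setT (fun x => (g x)%:E) ->
     measurable_fun setT g -> (forall x, ~ B x -> g x = 0) ->
     Rintegral mu setT (fun x => k x * g x) = 0) ->
  {ae mu, forall y, B y -> k y = 0}.
Proof.
move=> mB finB mk k_test.
have finA A : measurable A -> A `<=` B -> (mu A < +oo)%E.
  by move=> mA AB; apply: le_lt_trans finB; apply: le_measure; rewrite ?inE.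
have indic_out A : A `<=` B -> forall x, ~ B x -> \1_A x = 0 :> R.
  by move=> AB x nBx; rewrite /indic memNset // => /AB.
have k_le0 : {ae mu, forall y, B y -> k y <= 0}.
  apply: ae_le0_of_Rintegral_indic0 => // A mA AB; apply: k_test.
  - exact: integrable_indic_lty (finA _ mA AB).
  - exact: measurable_indic.
  - exact: indic_out.
have Nk_le0 : {ae mu, forall y, B y -> - k y <= 0}.
  apply: ae_le0_of_Rintegral_indic0 => //; first exact: measurableT_comp.
  move=> A mA AB; under eq_fun do rewrite mulNr -mulrN.
  apply: k_test.
  - rewrite (_ : (fun x => _) = (-%E \o (fun x => (\1_A x)%:E))) //.
    exact/integrableN/integrable_indic_lty/finA.
  - exact/measurableT_comp/measurable_indic.
  - by move=> x /(indic_out _ AB) ->; rewrite oppr0.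
apply: filterS2 k_le0 Nk_le0 => y h1 h2 By.
by have := h1 By; have := h2 By; lra.
Qed.

End NullIntegrals.

Lemma net_cvg0_eq0 (R : realType) (I : Type) (le : I -> I -> Prop) (u : I -> R) (l : R) :
  directed le -> (forall a, u a = 0) -> net_cvg le u l -> l = 0.
Proof.
move=> [_ le_refl _ _] u0 ul; apply/eqP/negPn/negP => l0.
have := ul `|l|; rewrite normr_gt0 => /(_ l0) [a0 Ha0].
by move: (Ha0 a0 (le_refl a0)); rewrite u0 sub0r normrN ltxx.
Qed.

Lemma directed_leq : directed (fun a b : nat => (a <= b)%N).
Proof.
split=> //; first by constructor; exact: 0%N.
  by move=> a b c; exact: leq_trans.
by move=> a b; exists (maxn a b); rewrite leq_maxl leq_maxr.
Qed.

Section DeltaNullLimits.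
Variables (R : realType) (n : nat).
Variable mu : {measure set (borelRn R n) -> \bar R}.
Variable delta : ('rV[R]_n -> R) -> ('rV[R]_n -> R).
Hypothesis delta_derivation : derivation mu delta.
Variable B : set 'rV[R]_n.
Hypotheses (mB : measurable (setB B)) (finB : (mu (setB B) < +oo)%E).
Local Notation delta_null := (delta_null mu delta B).

Lemma delta_null_net_limit (I : Type) (le : I -> I -> Prop)
    (fa : I -> 'rV[R]_n -> R) (f : 'rV[R]_n -> R) :
  directed le -> (forall a, delta_null (fa a)) -> Lipb f ->
  (exists C, forall a, Lipnorm_le C (fa a)) ->
  (forall x, net_cvg le (fun a => fa a x) (f x)) -> delta_null f.
Proof.
move=> dir Zfa Lf fa_bounded fa_cvg.
case: delta_derivation => delta_Linf _ _ delta_weakstar.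
have mdelta g : Lipb g -> measurable_fun setT (toB (delta g)).
  by move=> /delta_Linf [].
split => //; apply: (ae_eq0_of_Rintegral_mul0 (k := toB (delta f)) mB finB (mdelta f Lf)).
move=> g Lg mg g0.
apply: (net_cvg0_eq0 dir _ (delta_weakstar _ _ _ _ dir (fun a => (Zfa a).1) Lf
  fa_bounded fa_cvg g Lg)) => a.
apply: Rintegral_ae0; first by apply: measurable_funM => //; exact: mdelta (Zfa a).1.
apply: filterS (Zfa a).2 => y dy0.
have [By|nBy] := pselect (B y); first by rewrite /toB dy0 // mul0r.
by rewrite /toB g0 // mulr0.
Qed.

Lemma delta_null_norm u : delta_null u -> delta_null (fun x => `|u x|).
Proof.
move=> Zu; have [[Cu HCu] [Lu HLu]] := Zu.1.
pose e (k : nat) : R := k.+1%:R^-1.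
have e_gt0 k : 0 < e k by rewrite invr_gt0 ltr0n.
have e_le1 k : e k <= 1 by rewrite invf_le1 ?ltr0n // ler1n.
apply: (@delta_null_net_limit _ _
  (fun k x => Num.sqrt (u x ^+ 2 + e k ^+ 2)) _ directed_leq).
- by move=> k; exact: delta_null_sqrt_sqrD.
- exact: Lipb_comp (fun s t => ler_dist_dist s t) Zu.1.
- exists (`|Cu| + 1 + `|Lu|) => k; split.
    move=> x; rewrite ger0_norm ?sqrtr_ge0 //.
    have := dist_sqrt_sqrD_norm_le (u x) (ltW (e_gt0 k)).
    rewrite ler_norml => /andP[_]; rewrite lerBlDl => /le_trans; apply.
    have := HCu x; have := e_le1 k; have := ler_norm Cu; have := normr_ge0 Lu; lra.
  move=> x y; apply: le_trans (ler_dist_sqrt_sqrD _ _ (e_gt0 k)) _.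
  apply: le_trans (HLu x y) _; apply: ler_wpM2r; first exact: edist_ge0.
  have := ler_norm Lu; have := normr_ge0 Cu; lra.
- move=> x eps eps0; exists (Num.Def.archi_bound eps^-1) => k lt_k.
  apply: le_lt_trans (dist_sqrt_sqrD_norm_le _ (ltW (e_gt0 k))) _.
  rewrite invf_plt ?posrE ?ltr0n //.
  have epsV_ge0 : 0 <= eps^-1 by rewrite invr_ge0 ltW.
  apply: lt_le_trans (archi_boundP epsV_ge0) _.
  by rewrite ler_nat; exact: leqW.
Qed.

Lemma delta_null_min u v : delta_null u -> delta_null v ->
  delta_null (fun x => Num.min (u x) (v x)).
Proof.
move=> Zu Zv.
have Zsum := delta_null_lin delta_derivation 1 1 Zu Zv.
have Zdist := delta_null_norm (delta_null_lin delta_derivation 1 (-1) Zu Zv).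
apply: delta_null_ext (delta_null_lin delta_derivation (2^-1) (- 2^-1) Zsum Zdist) => x.
by rewrite minr_absE !mul1r mulN1r; ring.
Qed.

End DeltaNullLimits.

Section Balls.
Variables (R : realType) (n : nat).

Lemma continuous_edist (x : 'rV[R]_n) : continuous (edist x).
Proof.
have sum_cont : continuous (fun z : 'rV[R]_n => \sum_(i < n) (x ord0 i - z ord0 i) ^+ 2).
  apply: (@continuous_big _ _ +%R 0 xpredT add_continuous) => i _ w.
  have diff_cont : continuous (fun z : 'rV[R]_n => x ord0 i - z ord0 i).
    by move=> v; apply: continuousB; [exact: cst_continuous | exact: coord_continuous].
  exact: continuous_comp (diff_cont w) (@exprn_continuous R 2 _).
by move=> z; exact: continuous_comp (sum_cont z) (@sqrt_continuous R _).
Qed.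

Lemma measurable_eball (x : 'rV[R]_n) (r : R) : measurable (setB (eball x r)).
Proof.
apply: sub_sigma_algebra.
rewrite (_ : eball x r = edist x @^-1` [set t | t < r]) //.
by apply: open_comp; [move=> z _; exact: continuous_edist | exact: open_lt].
Qed.

End Balls.

Section ConeInfima.
Variables (R : realType) (n : nat) (f : 'rV[R]_n -> R) (M L : R).
Hypotheses (L_ge0 : 0 <= L) (f_bounded : forall x, `|f x| <= M).
Hypothesis f_lip : lipschitz_with L f.

Definition cone (rho : R) (y x : 'rV[R]_n) :=
  f y + L * \sum_(i < n) `|clamp rho (x ord0 i) - y ord0 i|.

Definition cone_min (rho : R) (s : seq 'rV[R]_n) : 'rV[R]_n -> R :=
  foldr (fun y g x => Num.min (cone rho y x) (g x)) (fun _ => M) s.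

Lemma lipschitz_cone rho y : lipschitz_with (L * n%:R) (cone rho y).
Proof.
move=> x x'; rewrite /cone opprD addrACA subrr add0r -mulrBr normrM ger0_norm //.
rewrite -mulrA; apply: ler_wpM2l => //; rewrite -sumrB.
apply: le_trans (ler_norm_sum _ _ _) _.
apply: le_trans (_ : _ <= \sum_(i < n) edist x x') _; last first.
  by rewrite sumr_const card_ord mulr_natl.
apply: ler_sum => i _; apply: le_trans (ler_dist_dist _ _) _.
rewrite opprD addrACA subrr addr0.
by apply: le_trans (ler_dist_clamp _ _ _) _; exact: ler_dist_coord_edist.
Qed.

Lemma norm_cone_min_le rho s x : `|cone_min rho s x| <= M.
Proof.
rewrite ler_norml; apply/andP; split; elim: s => [|y s IH] //=.
- by have := le_trans (normr_ge0 _) (f_bounded 0); lra.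
- rewrite le_min IH andbT /cone.
  have := f_bounded y; rewrite ler_norml => /andP[fyM _].
  apply: le_trans fyM _; rewrite lerDl; apply: mulr_ge0 => //; exact: sumr_ge0.
- by rewrite ge_min IH orbT.
Qed.

Lemma lipschitz_cone_min rho s : lipschitz_with (L * n%:R) (cone_min rho s).
Proof.
elim: s => [|y s IH] x x' /=.
  by rewrite subrr normr0; apply: mulr_ge0; [exact: mulr_ge0 | exact: edist_ge0].
by apply: ler_dist_min2; [exact: lipschitz_cone | exact: IH].
Qed.

(* On the box [-rho, rho]^n the clamps are inert and the l^1 distance dominates the
   Euclidean one, so every cone lies above [f] and touches it at its vertex. *)
Lemma cone_min_eq rho s (x : 'rV[R]_n) : (forall i, `|x ord0 i| <= rho) -> x \in s ->
  cone_min rho s x = f x.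
Proof.
move=> x_box x_s; apply/eqP; rewrite eq_le; apply/andP; split.
  elim: s x_s => [//|y s IH] /=.
  rewrite in_cons ge_min => /orP[/eqP <-|/IH ->]; last by rewrite orbT.
  rewrite /cone big1 ?mulr0 ?addr0 ?lexx // => i _.
  by rewrite clamp_id // subrr normr0.
elim: s {x_s} => [|y s IH] /=; first exact: le_trans (ler_norm _) (f_bounded x).
rewrite le_min IH andbT /cone.
under eq_bigr do rewrite clamp_id //.
have := f_lip x y; have := edist_le_sum_dist_coord x y.
rewrite ler_norml => /(ler_wpM2l L_ge0) ? /andP[_ ?]; lra.
Qed.

End ConeInfima.

Definition le_seq_nat (T : eqType) (a b : seq T * nat) :=
  {subset a.1 <= b.1} /\ (a.2 <= b.2)%N.

Lemma directed_le_seq_nat (T : eqType) : directed (@le_seq_nat T).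
Proof.
split.
- by constructor; exact: ([::], 0%N).
- by move=> a; split.
- move=> a b c [ab1 ab2] [bc1 bc2]; split; first by move=> x /ab1 /bc1.
  exact: leq_trans ab2 bc2.
- move=> a b; exists (a.1 ++ b.1, maxn a.2 b.2).
  by split; split => [x|] /=; rewrite ?mem_cat ?leq_maxl ?leq_maxr => // ->; rewrite ?orbT.
Qed.

Section DeltaNullBalls.
Variables (R : realType) (n : nat).
Variable mu : {measure set (borelRn R n) -> \bar R}.
Variable delta : ('rV[R]_n -> R) -> ('rV[R]_n -> R).
Hypothesis delta_derivation : derivation mu delta.

Lemma delta_null_clamp_coord (j : 'I_n) (h : 'rV[R]_n -> R) (r rho : R) :
  is_bar_delta mu delta (coordfun j) h -> aeeq mu h (fun _ => 0) ->
  0 < r -> r <= rho -> delta_null mu delta (eball 0 r) (fun x => clamp rho (x ord0 j)).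
Proof.
move=> h_bar h0 r0 r_rho; have rho0 : 0 < rho := lt_le_trans r0 r_rho.
have L_clamp := Lipb_clamp_coord j (ltW rho0).
split => //.
have clamp_coordE y : eball 0 rho y -> clamp rho (y ord0 j) = coordfun j y.
  move=> y_ball; apply: clamp_id; apply: le_trans (ltW y_ball).
  by have := ler_dist_coord_edist 0 y j; rewrite mxE sub0r normrN.
apply: filterS2 h0 (h_bar 0 rho rho0 _ L_clamp clamp_coordE) => y hy0 hy By.
rewrite /toB in hy hy0 *; rewrite -hy ?hy0 //; exact: lt_le_trans By r_rho.
Qed.

Lemma delta_null_cone_min (B : set 'rV[R]_n) (f : 'rV[R]_n -> R) (M L rho : R) s :
  measurable (setB B) -> (mu (setB B) < +oo)%E ->
  (forall i, delta_null mu delta B (fun x => clamp rho (x ord0 i))) ->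
  delta_null mu delta B (cone_min f M L rho s).
Proof.
move=> mB finB Zclamp.
have Zcone y : delta_null mu delta B (cone f L rho y).
  have Zdist i : delta_null mu delta B (fun x => `|clamp rho (x ord0 i) - y ord0 i|).
    apply: (delta_null_norm delta_derivation mB finB
      (u := fun x => clamp rho (x ord0 i) - y ord0 i)).
    apply: delta_null_ext (delta_null_lin delta_derivation 1 (-1) (Zclamp i)
      (delta_null_cst delta_derivation _ (y ord0 i))) => x.
    by rewrite mul1r mulN1r.
  apply: delta_null_ext (delta_null_lin delta_derivation 1 L
    (delta_null_cst delta_derivation _ (f y)) (delta_null_sum delta_derivation _ Zdist)) => x.
  by rewrite mul1r.
elim: s => [|y s IH] /=; first exact: delta_null_cst.
exact: delta_null_min.
Qed.

Lemma delta_null_ball (r : R) (f : 'rV[R]_n -> R) :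
  0 < r -> (mu (setB (eball 0 r)) < +oo)%E ->
  (forall j : 'I_n, exists h, is_bar_delta mu delta (coordfun j) h /\ aeeq mu h (fun _ => 0)) ->
  Lipb f -> delta_null mu delta (eball 0 r) f.
Proof.
move=> r0 finB coord_null Lf.
have mB := measurable_eball (0 : 'rV[R]_n) r.
have [[M f_bounded] [L f_lip]] := Lf.
have M_ge0 : 0 <= M := le_trans (normr_ge0 _) (f_bounded 0).
have {}f_lip : lipschitz_with `|L| f := lipschitz_with_le (ler_norm L) f_lip.
pose fa (a : seq 'rV[R]_n * nat) := cone_min f M `|L| (r + a.2%:R) a.1.
apply: (delta_null_net_limit delta_derivation mB finB (fa := fa)
  (directed_le_seq_nat _)) => //.
- move=> [s m]; apply: delta_null_cone_min => // i.
  have [h [h_bar h0]] := coord_null i.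
  by apply: delta_null_clamp_coord h_bar h0 r0 _; rewrite lerDl.
- have nL_ge0 : 0 <= `|L| * n%:R by apply: mulr_ge0.
  exists (M + `|L| * n%:R) => a; split => [x|].
    by apply: le_trans (norm_cone_min_le (normr_ge0 L) f_bounded _ _ _) _; rewrite lerDl.
  by apply: lipschitz_with_le (lipschitz_cone_min f M (normr_ge0 L) _ _); rewrite lerDr.
- move=> x e e0; pose m := Num.Def.archi_bound (\sum_(i < n) `|x ord0 i|).
  exists ([:: x], m) => -[s k] [/= sub_s le_m_k].
  have x_box i : `|x ord0 i| <= r + k%:R.
    apply: le_trans (_ : _ <= \sum_(i < n) `|x ord0 i|) _.
      by rewrite (bigD1 i) //= lerDl; exact: sumr_ge0.
    apply: le_trans (ltW (archi_boundP (sumr_ge0 _ _))) _ => [i' _|]; first exact: normr_ge0.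
    by rewrite ler_wpDl ?ler_nat // ltW.
  rewrite /fa /= cone_min_eq ?subrr ?normr0 //.
  by apply: sub_s; rewrite mem_seq1.
Qed.

End DeltaNullBalls.

Unset Implicit Arguments.
Theorem corollary2p21 (R : realType) (n : nat)
    (mu : {measure set (borelRn R n) -> \bar R})
    (delta : ('rV[R]_n -> R) -> ('rV[R]_n -> R)) :
  radon mu ->
  derivation mu delta ->
  (forall j : 'I_n, exists h : 'rV[R]_n -> R,
      is_bar_delta mu delta (coordfun j) h /\ aeeq mu h (fun _ => 0)) ->
  forall f : 'rV[R]_n -> R, Lipb f -> aeeq mu (delta f) (fun _ => 0).
Proof.
move=> [ball_fin _ _] delta_derivation coord_null f Lf.
have null_on_ball k : {ae mu, forall y : borelRn R n,
    setB (eball 0 k.+1%:R) y -> delta f y = 0}.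
  have r0 : 0 < k.+1%:R :> R by rewrite ltr0n.
  exact: (delta_null_ball delta_derivation r0 (ball_fin 0 _ r0) coord_null Lf).2.
apply: filterS (ae_foralln null_on_ball) => y y_null.
apply: (y_null (Num.Def.archi_bound (edist 0 y))).
apply: lt_le_trans (archi_boundP (edist_ge0 _ _)) _.
by rewrite ler_nat.
Qed.
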